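(* Let $k\to A$ and $k\to B$ be homomorphisms of commutative rings, and let $D:M_1\to M_2$ and $E:N_1\to N_2$ be differential operators (relative to $k$) between $A$-modules $M_1,M_2$ and $B$-modules $N_1,N_2$ respectively. Then $$D\otimes_kE:M_1\otimes_kN_1\to M_2\otimes_kN_2$$ is a differential operator (relative to $k$) between the $A\otimes_kB$-modules $M_1\otimes_kN_1$ and $M_2\otimes_kN_2$.
   Context: For a ring homomorphism $k\to R$ and an $R$-module $Q$, $I_{R/k}=\ker(R\otimes_kR\to R)$ and $\mathcal J^n(Q/k)=(R\otimes_kQ)/I_{R/k}^{n+1}(R\otimes_kQ)$, with universal derivation $d^n_{Q/k}(q)=\overline{1\otimes q}$ and $R$-module structure via $r\mapsto r\otimes1$. A $k$-linear map $D:Q_1\to Q_2$ of $R$-modules is a differential operator relative to $k$ if $D=\widetilde D\circ d^n_{Q_1/k}$ for some $n\in\mathbb N_0$ and some $R$-linear $\widetilde D:\mathcal J^n(Q_1/k)\to Q_2$. *)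

From HB Require Import structures.
From mathcomp Require Import all_boot all_algebra.
From mathcomp Require Import boolp.
Import GRing.Theory.
Set Implicit Arguments. Unset Strict Implicit. Unset Printing Implicit Defensive.
Local Open Scope ring_scope.
Local Open Scope quotient_scope.

Definition sumf (M N : Type) (W : zmodType) (f : M -> N -> W) (s : seq (M * N)) : W :=
  \sum_(p <- s) f p.1 p.2.

Definition balanced (k : Type) (M N : zmodType) (aM : k -> M -> M) (aN : k -> N -> N)
  (W : zmodType) (f : M -> N -> W) : Prop :=
  [/\ forall m m' n, f (m + m') n = f m n + f m' n,
      forall m n n', f m (n + n') = f m n + f m n' &
      forall c m n, f (aM c m) n = f m (aN c n)].

Section Tensor.
Variables (k : Type) (M N : zmodType) (aM : k -> M -> M) (aN : k -> N -> N).

Definition tens_rel (s t : seq (M * N)) : Prop :=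
  forall (W : zmodType) (f : M -> N -> W), balanced aM aN f -> sumf f s = sumf f t.

Definition tens_eq : rel (seq (M * N)) := fun s t => `[< tens_rel s t >].

Lemma tens_eq_refl : reflexive tens_eq.
Proof. by move=> s; apply/asboolP. Qed.
Lemma tens_eq_sym : symmetric tens_eq.
Proof.
by move=> s t; apply/asboolP/asboolP => h W f hf; rewrite h.
Qed.
Lemma tens_eq_trans : transitive tens_eq.
Proof.
by move=> t s u /asboolP h1 /asboolP h2; apply/asboolP => W f hf; rewrite h1 // h2.
Qed.

Canonical tens_equiv := EquivRel tens_eq tens_eq_refl tens_eq_sym tens_eq_trans.

Definition tensor := {eq_quot tens_eq}.
HB.instance Definition _ := Choice.on tensor.

(** class of a formal sum [\sum_i m_i ⊗ n_i], and a representative *)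
Definition tpi (s : seq (M * N)) : tensor := \pi_{eq_quot tens_eq} s.
Definition trepr (x : tensor) : seq (M * N) := repr (x : {eq_quot tens_eq}).

Lemma tpiK : cancel trepr tpi.
Proof. exact: reprK. Qed.

Lemma tensW (P : tensor -> Type) : (forall s, P (tpi s)) -> forall x, P x.
Proof. by move=> h x; rewrite -[x]tpiK. Qed.

Lemma tensP s t : tens_rel s t -> tpi s = tpi t.
Proof. by move=> h; apply/eqmodP/asboolP. Qed.

Lemma sumf_pi (W : zmodType) (f : M -> N -> W) s :
  balanced aM aN f -> sumf f (trepr (tpi s)) = sumf f s.
Proof.
move=> hf; have /asboolP h : tens_eq (trepr (tpi s)) s.
  by apply/eqmodP; rewrite /trepr /tpi reprK.
exact: h.
Qed.

Definition tens_zero : tensor := tpi [::].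
Definition tens_add (x y : tensor) : tensor := tpi (trepr x ++ trepr y).
Definition tens_opp (x : tensor) : tensor :=
  tpi [seq (- p.1, p.2) | p <- trepr x].

Lemma sumf_cat (W : zmodType) (f : M -> N -> W) s t :
  sumf f (s ++ t) = sumf f s + sumf f t.
Proof. by rewrite /sumf big_cat. Qed.

Lemma sumf_nil (W : zmodType) (f : M -> N -> W) : sumf f [::] = 0.
Proof. by rewrite /sumf big_nil. Qed.

Lemma balancedN (W : zmodType) (f : M -> N -> W) :
  balanced aM aN f -> forall m n, f (- m) n = - f m n.
Proof.
case=> hD _ _ m n.
have f0 : f 0 n = 0.
  have := hD 0 0 n; rewrite addr0 => /esym/eqP.
  by rewrite -subr_eq0 addrK => /eqP.
apply/eqP; rewrite -addr_eq0 -hD addNr; exact/eqP.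
Qed.

Lemma sumf_opp (W : zmodType) (f : M -> N -> W) s : balanced aM aN f ->
  sumf f [seq (- p.1, p.2) | p <- s] = - sumf f s.
Proof.
move=> hf; rewrite /sumf big_map -sumrN; apply: eq_bigr => p _ /=.
exact: balancedN.
Qed.

Lemma tens_addA : associative tens_add.
Proof.
move=> x y z; elim/tensW: x => x; elim/tensW: y => y; elim/tensW: z => z; rewrite /tens_add.
by apply: tensP => W f hf; rewrite ?(sumf_cat, sumf_pi _ hf) addrA.
Qed.

Lemma tens_addC : commutative tens_add.
Proof.
move=> x y; elim/tensW: x => x; elim/tensW: y => y; rewrite /tens_add.
by apply: tensP => W f hf; rewrite ?(sumf_cat, sumf_pi _ hf) addrC.
Qed.

Lemma tens_add0 : left_id tens_zero tens_add.
Proof.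
move=> x; elim/tensW: x => x; rewrite /tens_add /tens_zero.
by apply: tensP => W f hf; rewrite ?(sumf_cat, sumf_pi _ hf) sumf_nil add0r.
Qed.

Lemma tens_addN : left_inverse tens_zero tens_opp tens_add.
Proof.
move=> x; elim/tensW: x => x; rewrite /tens_add /tens_zero /tens_opp.
apply: tensP => W f hf.
by rewrite ?(sumf_cat, sumf_pi _ hf, sumf_opp _ hf) addNr sumf_nil.
Qed.

HB.instance Definition _ :=
  GRing.isZmodule.Build tensor tens_addA tens_addC tens_add0 tens_addN.

Lemma tens_addE s t : tpi s + tpi t = tpi (s ++ t).
Proof.
change (tens_add (tpi s) (tpi t) = tpi (s ++ t)).
by rewrite /tens_add; apply: tensP => W f hf; rewrite ?(sumf_cat, sumf_pi _ hf).
Qed.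

Definition tmul (m : M) (n : N) : tensor := tpi [:: (m, n)].

End Tensor.

Arguments tensor {k M N} aM aN.
Arguments tmul {k M N aM aN}.
Arguments tpi {k M N aM aN}.
Arguments trepr {k M N aM aN}.

Section Lift.
Variables (k : Type) (A B M N M' N' : zmodType).
Variables (aA : k -> A -> A) (aB : k -> B -> B) (aM : k -> M -> M) (aN : k -> N -> N).
Variables (aM' : k -> M' -> M') (aN' : k -> N' -> N').
Variables (op1 : A -> M -> M') (op2 : B -> N -> N').

Definition pairs (s : seq (A * B)) (t : seq (M * N)) : seq (M' * N') :=
  [seq (op1 p.1 q.1, op2 p.2 q.2) | p <- s, q <- t].

Definition lift2 (x : tensor aA aB) (y : tensor aM aN) : tensor aM' aN' :=
  tpi (pairs (trepr x) (trepr y)).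

Lemma sumf_pairs (W : zmodType) (f : M' -> N' -> W) s t :
  sumf f (pairs s t) = \sum_(p <- s) \sum_(q <- t) f (op1 p.1 q.1) (op2 p.2 q.2).
Proof. by rewrite /sumf /pairs big_allpairs_dep. Qed.

Hypothesis op1Dl : forall a a' m, op1 (a + a') m = op1 a m + op1 a' m.
Hypothesis op1Dr : forall a m m', op1 a (m + m') = op1 a m + op1 a m'.
Hypothesis op2Dl : forall b b' n, op2 (b + b') n = op2 b n + op2 b' n.
Hypothesis op2Dr : forall b n n', op2 b (n + n') = op2 b n + op2 b n'.
Hypothesis op1kl : forall c a m, op1 (aA c a) m = aM' c (op1 a m).
Hypothesis op1kr : forall c a m, op1 a (aM c m) = aM' c (op1 a m).
Hypothesis op2kl : forall c b n, op2 (aB c b) n = aN' c (op2 b n).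
Hypothesis op2kr : forall c b n, op2 b (aN c n) = aN' c (op2 b n).

Lemma lift2_pi s t :
  lift2 (tpi s) (tpi t) = tpi (pairs s t).
Proof.
rewrite /lift2; apply: tensP => W f [hD1 hD2 hk]; rewrite !sumf_pairs.
transitivity (\sum_(p <- trepr (tpi (aM:=aA) (aN:=aB) s))
               \sum_(q <- t) f (op1 p.1 q.1) (op2 p.2 q.2)).
  apply: eq_bigr => p _.
  have hb : balanced aM aN (fun m n => f (op1 p.1 m) (op2 p.2 n)).
    split=> [m m' n|m n n'|c m n]; first by rewrite op1Dr hD1.
      by rewrite op2Dr hD2.
    by rewrite op1kr op2kr hk.
  exact: (sumf_pi t hb).
have hb : balanced aA aB
    (fun a b => \sum_(q <- t) f (op1 a q.1) (op2 b q.2)).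
  split=> [a a' b|a b b'|c a b].
  - by rewrite -big_split; apply: eq_bigr => q _; rewrite op1Dl hD1.
  - by rewrite -big_split; apply: eq_bigr => q _; rewrite op2Dl hD2.
  - by apply: eq_bigr => q _; rewrite op1kl op2kl hk.
exact: (sumf_pi s hb).
Qed.

End Lift.

Arguments lift2 {k A B M N M' N' aA aB aM aN aM' aN'} op1 op2 x y.

Definition kact_r (k : Type) (R : pzRingType) (phi : k -> R) : k -> R -> R :=
  fun c r => phi c * r.
Definition kact_m (k : Type) (R : pzRingType) (phi : k -> R) (V : lmodType R) :
  k -> V -> V := fun c v => phi c *: v.

Section TensAlg.
Variables (k A B : comPzRingType) (phiA : {rmorphism k -> A}) (phiB : {rmorphism k -> B}).

Definition tens_alg := tensor (kact_r phiA) (kact_r phiB).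
HB.instance Definition _ := GRing.Zmodule.on tens_alg.

Definition ta_one : tens_alg := tpi [:: (1, 1)].
Definition ta_mul (x y : tens_alg) : tens_alg := lift2 ( *%R ) ( *%R ) x y.

Lemma ta_mul_pi s t : ta_mul (tpi s) (tpi t) = tpi (pairs *%R *%R s t).
Proof.
apply: lift2_pi => *; rewrite /kact_r ?mulrDl ?mulrDr ?mulrA ?mulrCA //.
all: by congr (_ * _); rewrite mulrC.
Qed.

Lemma ta_mulA : associative ta_mul.
Proof.
move=> x y z; elim/tensW: x => x; elim/tensW: y => y; elim/tensW: z => z.
rewrite !ta_mul_pi; apply: tensP => W f hf.
rewrite /sumf /pairs !big_allpairs_dep /=.
under eq_bigr => p _ do rewrite big_allpairs_dep /=.
apply: eq_bigr => p _; apply: eq_bigr => q _; apply: eq_bigr => r _ /=.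
by rewrite !mulrA.
Qed.

Lemma ta_mulC : commutative ta_mul.
Proof.
move=> x y; elim/tensW: x => x; elim/tensW: y => y.
rewrite !ta_mul_pi; apply: tensP => W f hf.
rewrite /sumf /pairs !big_allpairs_dep /= exchange_big /=.
by apply: eq_bigr => p _; apply: eq_bigr => q _; rewrite !(mulrC p.1) !(mulrC p.2).
Qed.

Lemma ta_mul1 : left_id ta_one ta_mul.
Proof.
move=> x; elim/tensW: x => x; rewrite ta_mul_pi; apply: tensP => W f hf.
rewrite /sumf /pairs big_allpairs_dep big_seq1 /=.
by apply: eq_bigr => q _; rewrite !mul1r.
Qed.

Lemma ta_mulDl : left_distributive ta_mul +%R.
Proof.
move=> x y z; elim/tensW: x => x; elim/tensW: y => y; elim/tensW: z => z.
rewrite tens_addE !ta_mul_pi tens_addE; apply: tensP => W f hf.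
by rewrite /sumf /pairs big_cat !big_allpairs_dep big_cat.
Qed.

HB.instance Definition _ :=
  GRing.Zmodule_isComPzRing.Build tens_alg ta_mulA ta_mulC ta_mul1 ta_mulDl.

Definition tens_struct (c : k) : tens_alg := tpi [:: (phiA c, 1)].

Section TensMod.
Variables (M : lmodType A) (N : lmodType B).

Definition tens_mod := tensor (kact_m phiA (V := M)) (kact_m phiB (V := N)).
HB.instance Definition _ := GRing.Zmodule.on tens_mod.

Definition tm_scale (x : tens_alg) (y : tens_mod) : tens_mod :=
  lift2 ( *:%R ) ( *:%R ) x y.

Lemma tm_scale_pi s t : tm_scale (tpi s) (tpi t) = tpi (pairs *:%R *:%R s t).
Proof.
apply: lift2_pi => *; rewrite /kact_r /kact_m ?scalerDl ?scalerDr ?scalerA //;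
  by rewrite mulrC.
Qed.

Lemma tm_scaleA a b v : tm_scale a (tm_scale b v) = tm_scale (a * b) v.
Proof.
elim/tensW: a => a; elim/tensW: b => b; elim/tensW: v => v.
change (tm_scale (tpi a) (tm_scale (tpi b) (tpi v)) =
        tm_scale (ta_mul (tpi a) (tpi b)) (tpi v)).
rewrite ta_mul_pi !tm_scale_pi; apply: tensP => W f hf.
rewrite /sumf /pairs !big_allpairs_dep /=.
under eq_bigr => p _ do rewrite big_allpairs_dep /=.
apply: eq_bigr => p _; apply: eq_bigr => q _; apply: eq_bigr => r _ /=.
by rewrite !scalerA.
Qed.

Lemma tm_scale1 : left_id 1 tm_scale.
Proof.
move=> v; elim/tensW: v => v.
change (tm_scale ta_one (tpi v) = tpi v).
rewrite tm_scale_pi; apply: tensP => W f hf.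
rewrite /sumf /pairs big_allpairs_dep big_seq1 /=.
by apply: eq_bigr => q _; rewrite !scale1r.
Qed.

Lemma tm_scaleDr : right_distributive tm_scale +%R.
Proof.
move=> a v w; elim/tensW: a => a; elim/tensW: v => v; elim/tensW: w => w.
rewrite tens_addE !tm_scale_pi tens_addE; apply: tensP => W f hf.
rewrite /sumf /pairs big_cat !big_allpairs_dep.
under eq_bigr => p _ do rewrite big_cat.
by rewrite big_split.
Qed.

Lemma tm_scaleDl v : {morph tm_scale^~ v : a b / a + b}.
Proof.
move=> a b; elim/tensW: a => a; elim/tensW: b => b; elim/tensW: v => v.
rewrite tens_addE !tm_scale_pi tens_addE; apply: tensP => W f hf.
by rewrite /sumf /pairs big_cat !big_allpairs_dep big_cat.
Qed.

HB.instance Definition _ :=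
  GRing.Zmodule_isLmodule.Build tens_alg tens_mod tm_scaleA tm_scale1 tm_scaleDr tm_scaleDl.

End TensMod.

(** [D ⊗_k E], induced by [m ⊗ n |-> D m ⊗ E n] (well defined for k-linear D, E) *)
Definition tens_map (M1 M2 : lmodType A) (N1 N2 : lmodType B)
  (D : M1 -> M2) (E : N1 -> N2) (x : tens_mod M1 N1) : tens_mod M2 N2 :=
  tpi [seq (D p.1, E p.2) | p <- trepr x].

End TensAlg.

(** For a ring map [phi : k -> R] and an R-module [Q1]:
   - [RtR] is [R ⊗_k R], [RtQ] is [R ⊗_k Q1] (k acting through [phi]);
   - [mult_map] is the multiplication [R ⊗_k R -> R], its kernel is [I_{R/k}];
   - [RR_act] is the [R ⊗_k R]-module structure of [R ⊗_k Q1];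
   - [Ipow_mod n] is the submodule [I^{n+1} (R ⊗_k Q1)], i.e. the set of
     finite sums of elements [x_0 (x_1 (... (x_n y)))] with [x_i ∈ I];
   - [J^n(Q1/k) = (R ⊗_k Q1) / Ipow_mod n], with R-structure [r |-> r ⊗ 1]
     ([jet_R_scale]) and universal derivation [d^n q = class of 1 ⊗ q]
     ([jet_d]).
   An R-linear map [J^n(Q1/k) -> Q2] is the same thing as an R-linear map
   [Dt : R ⊗_k Q1 -> Q2] vanishing on [Ipow_mod n] (universal property of the
   quotient); [D = Dt ∘ d^n] then reads [D q = Dt (1 ⊗ q)]. *)
Section DiffOp.
Variables (k R : comPzRingType) (phi : k -> R) (Q1 Q2 : lmodType R).

Definition RtR := tensor (kact_r phi) (kact_r phi).
Definition RtQ := tensor (kact_r phi) (kact_m phi (V := Q1)).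

Definition mult_map (x : RtR) : R := sumf ( *%R ) (trepr x).
Definition Ikernel (x : RtR) : Prop := mult_map x = 0.

Definition RR_act (x : RtR) (y : RtQ) : RtQ := lift2 ( *%R ) ( *:%R ) x y.

Fixpoint Ipow_gen (n : nat) (z : RtQ) : Prop :=
  match n with
  | 0 => exists x y, Ikernel x /\ z = RR_act x y
  | n'.+1 => exists x y, [/\ Ikernel x, Ipow_gen n' y & z = RR_act x y]
  end.

Definition Ipow_mod (n : nat) (z : RtQ) : Prop :=
  exists s : seq RtQ, (forall g, g \in s -> Ipow_gen n g) /\ z = \sum_(g <- s) g.

Definition jet_R_scale (r : R) (x : RtQ) : RtQ := RR_act (tpi [:: (r, 1)]) x.
Definition jet_d (q : Q1) : RtQ := tpi [:: (1, q)].

Definition is_diffop (D : Q1 -> Q2) : Prop :=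
  [/\ forall q q', D (q + q') = D q + D q',
      forall c q, D (phi c *: q) = phi c *: D q &
      exists (n : nat) (Dt : RtQ -> Q2),
        [/\ forall x y, Dt (x + y) = Dt x + Dt y,
            forall r x, Dt (jet_R_scale r x) = r *: Dt x,
            forall x, Ipow_mod n x -> Dt x = 0 &
            forall q, D q = Dt (jet_d q)]].

End DiffOp.

Arguments is_diffop {k R} phi {Q1 Q2} D.
Arguments tens_map {k A B phiA phiB M1 M2 N1 N2} D E x.
Arguments tens_struct {k A B} phiA phiB c.

(* An R-linear map F : R ⊗_k Q1 -> Q2 kills I^(n+1) (R ⊗_k Q1) exactly when all
   its (n+1)-fold commutators with the multiplications by 1 ⊗ b vanish:
   for x = Σ x'_i ⊗ x''_i in I one has F (x y) = Σ x'_i [F, 1 ⊗ x''_i] (y),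
   and conversely 1 ⊗ b - b ⊗ 1 lies in I.  Given such F and G for D and E,
   the map (a ⊗ b) ⊗ (m ⊗ n) |-> F (a ⊗ m) ⊗ G (b ⊗ n) factors D ⊗ E through
   the jets of M1 ⊗ N1, and its commutator with a ⊗ b obeys the Leibniz rule
   [F ⊠ G, a ⊗ b] = [F, a] ⊠ [G, b] + [F, a] ⊠ b G + a F ⊠ [G, b],
   so the orders of F and G add up. *)
From HB Require Import structures.
From mathcomp Require Import all_boot all_algebra.
From mathcomp Require Import boolp.
Import GRing.Theory.
Set Implicit Arguments. Unset Strict Implicit. Unset Printing Implicit Defensive.
Local Open Scope ring_scope.

Lemma additive_map0 (U V : zmodType) (f : U -> V) :
  (forall x y, f (x + y) = f x + f y) -> f 0 = 0.
Proof.
by move=> fD; apply: (addrI (f 0)); rewrite -fD !addr0.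
Qed.

Lemma additive_mapN (U V : zmodType) (f : U -> V) x :
  (forall x y, f (x + y) = f x + f y) -> f (- x) = - f x.
Proof.
by move=> fD; apply/eqP; rewrite -addr_eq0 -fD addNr (additive_map0 fD).
Qed.

Section Balanced.
Variables (k : Type) (M N W : zmodType) (aM : k -> M -> M) (aN : k -> N -> N).
Variables (f : M -> N -> W) (f_bal : balanced aM aN f).

Lemma balanced0l n : f 0 n = 0.
Proof. by case: f_bal => fDl _ _; apply: additive_map0 (fun x y => fDl x y n). Qed.

Lemma balanced0r m : f m 0 = 0.
Proof. by case: f_bal => _ fDr _; apply: additive_map0 (fDr m). Qed.

Lemma balanced_expand u v w z :
  f u w = f (u - v) (w - z) + f (u - v) z + f v (w - z) + f v z.
Proof. by case: f_bal => fDl fDr _; rewrite -addrA -!fDr !subrK -fDl subrK. Qed.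

End Balanced.

Lemma tpi_sum (k : Type) (M N : zmodType) (aM : k -> M -> M) (aN : k -> N -> N) s :
  tpi (aM := aM) (aN := aN) s = \sum_(x <- s) tpi [:: x].
Proof.
elim: s => [|x s IHs]; first by rewrite big_nil.
by rewrite big_cons -IHs tens_addE.
Qed.

Lemma pairs1 (A B M N M' N' : zmodType) (op1 : A -> M -> M') (op2 : B -> N -> N') p t :
  pairs op1 op2 [:: p] t = [seq (op1 p.1 q.1, op2 p.2 q.2) | q <- t].
Proof. by rewrite /pairs /= cats0. Qed.

Section Jets.
Variables (k R : comPzRingType) (phi : k -> R) (Q1 Q2 : lmodType R).

Notation RtQ := (RtQ phi Q1).
Notation RtR := (RtR phi).
Notation act := (@RR_act k R phi Q1).

Lemma RR_act_pi s t : act (tpi s : RtR) (tpi t : RtQ) = tpi (pairs *%R *:%R s t).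
Proof.
apply: lift2_pi => *;
  rewrite /kact_r /kact_m ?mulrDl ?mulrDr ?scalerDl ?scalerDr ?mulrA ?scalerA //.
all: by rewrite (mulrC _ (phi _)).
Qed.

Lemma RR_actDr x : {morph act x : y y' / y + y'}.
Proof.
move=> y y'; elim/tensW: x => x; elim/tensW: y => y; elim/tensW: y' => y'.
rewrite tens_addE !RR_act_pi tens_addE; apply: tensP => W f _.
rewrite /sumf /pairs big_cat !big_allpairs_dep.
by under eq_bigr => p _ do rewrite big_cat; rewrite big_split.
Qed.

Lemma RR_actDl y : {morph act^~ y : x x' / x + x'}.
Proof.
move=> x x'; elim/tensW: x => x; elim/tensW: x' => x'; elim/tensW: y => y.
rewrite tens_addE !RR_act_pi tens_addE; apply: tensP => W f _.
by rewrite /sumf /pairs big_cat !big_allpairs_dep big_cat.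
Qed.

Lemma mult_map_pi s : mult_map (tpi s : RtR) = sumf *%R s.
Proof.
apply: sumf_pi; split=> *; rewrite /kact_r ?mulrDl ?mulrDr //.
by rewrite mulrCA mulrA.
Qed.

(* R-linearity for the structure r |-> r ⊗ 1; such maps killing [Ipow_mod n]
   are the R-linear maps J^n(Q1/k) -> Q2. *)
Definition jet_linear (F : RtQ -> Q2) : Prop :=
  (forall y y', F (y + y') = F y + F y') /\
  (forall r y, F (jet_R_scale r y) = r *: F y).

Definition jet_rscale (b : R) (y : RtQ) : RtQ := act (tpi [:: (1, b)]) y.

Definition jet_comm (b : R) (F : RtQ -> Q2) (y : RtQ) : Q2 :=
  F (jet_rscale b y) - b *: F y.

Fixpoint comm_nil (n : nat) (F : RtQ -> Q2) : Prop :=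
  if n is n'.+1 then forall b, comm_nil n' (jet_comm b F) else forall y, F y = 0.

Lemma jet_rscaleD y : {morph jet_rscale^~ y : b b' / b + b'}.
Proof.
move=> b b'; rewrite /jet_rscale -RR_actDl tens_addE; congr act.
by apply: tensP => W f [_ fDr _]; rewrite /sumf !big_cons !big_nil /= fDr !addr0.
Qed.

Lemma jet_rscale_R_scale b r y :
  jet_rscale b (jet_R_scale r y) = jet_R_scale r (jet_rscale b y).
Proof.
elim/tensW: y => t; rewrite /jet_rscale /jet_R_scale.
rewrite (RR_act_pi [:: (r, 1)] t) (RR_act_pi [:: (1, b)] t) !pairs1.
by rewrite !RR_act_pi !pairs1 -!map_comp; congr tpi; apply: eq_map => q /=;
  rewrite !mul1r !scale1r.
Qed.

Lemma jet_linearZ (F : RtQ -> Q2) r : jet_linear F -> jet_linear (fun y => r *: F y).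
Proof.
case=> FD FZ; split=> [y y'|c y]; first by rewrite FD scalerDr.
by rewrite FZ !scalerA mulrC.
Qed.

Lemma jet_linear_comm b F : jet_linear F -> jet_linear (jet_comm b F).
Proof.
case=> FD FZ; split=> [y y'|r y]; rewrite /jet_comm.
  by rewrite /jet_rscale RR_actDr !FD scalerDr opprD addrACA.
by rewrite jet_rscale_R_scale !FZ scalerBr !scalerA mulrC.
Qed.

Lemma jet_commD b b' F : jet_linear F ->
  jet_comm (b + b') F = fun y => jet_comm b F y + jet_comm b' F y.
Proof.
case=> FD _; apply: funext => y.
by rewrite /jet_comm jet_rscaleD FD scalerDl opprD addrACA.
Qed.

Lemma jet_comm_sum (I : Type) (s : seq I) (g : I -> R) F : jet_linear F ->
  jet_comm (\sum_(i <- s) g i) F = fun y => \sum_(i <- s) jet_comm (g i) F y.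
Proof.
move=> lF; elim: s => [|i s IHs]; apply: funext => y.
  rewrite !big_nil /jet_comm scale0r subr0 (additive_map0 (jet_rscaleD y)).
  exact: additive_map0 (proj1 lF).
by rewrite big_cons jet_commD // IHs big_cons.
Qed.

Lemma jet_linear_RR_act F x y : jet_linear F ->
  F (act x y) = \sum_(p <- trepr x) p.1 *: jet_comm p.2 F y + mult_map x *: F y.
Proof.
case=> FD FZ.
have -> : F (act x y) = \sum_(p <- trepr x) p.1 *: F (jet_rscale p.2 y).
  elim/tensW: y => t; rewrite -{1}(tpiK x); elim: (trepr x) => [|p s IHs].
    by rewrite big_nil (additive_map0 (RR_actDl (tpi t))) (additive_map0 FD).
  rewrite big_cons -IHs -cat1s -tens_addE RR_actDl FD -FZ; congr (F _ + _).
  rewrite /jet_rscale /jet_R_scale (RR_act_pi [:: p] t) (RR_act_pi [:: (1, p.2)] t) !pairs1.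
  rewrite !RR_act_pi !pairs1 -!map_comp.
  by congr tpi; apply: eq_map => q /=; rewrite !mul1r !scale1r.
rewrite /jet_comm /mult_map /sumf scaler_suml -big_split /=.
by apply: eq_bigr => p _; rewrite scalerBr scalerA subrK.
Qed.

Definition diag_elt (b : R) : RtR := tpi [:: (1, b); (- b, 1)].

Lemma diag_elt_ker b : Ikernel (diag_elt b).
Proof. by rewrite /Ikernel mult_map_pi /sumf !big_cons big_nil /= mul1r mulr1 addr0 subrr. Qed.

Lemma RR_act_diag_elt b y : act (diag_elt b) y = jet_rscale b y - jet_R_scale b y.
Proof.
rewrite /diag_elt -cat1s -tens_addE RR_actDl; congr (_ + _).
apply/eqP; rewrite -addr_eq0 -RR_actDl tens_addE /=.
have -> : tpi [:: (- b, 1); (b, 1)] = 0 :> RtR.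
  apply: tensP => W f f_bal; rewrite /sumf !big_cons !big_nil /=.
  by rewrite (balancedN f_bal) addr0 addNr.
by rewrite (additive_map0 (RR_actDl y)).
Qed.

Lemma comm_nil_Ipow_gen n F : jet_linear F ->
  comm_nil n.+1 F -> forall z, Ipow_gen n z -> F z = 0.
Proof.
elim: n F => [|n IHn] F lF cF z /=.
  case=> x [y [xI ->]]; rewrite jet_linear_RR_act // xI scale0r addr0.
  by rewrite big1 // => p _; rewrite (cF p.2 y) scaler0.
case=> x [y [xI yI ->]]; rewrite jet_linear_RR_act // xI scale0r addr0.
by rewrite big1 // => p _; rewrite (IHn _ (jet_linear_comm _ lF) (cF p.2) y yI) scaler0.
Qed.

Lemma Ipow_gen_comm_nil n F : jet_linear F ->
  (forall z, Ipow_gen n z -> F z = 0) -> comm_nil n.+1 F.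
Proof.
have commE F' b y : jet_linear F' ->
    jet_comm b F' y = F' (act (diag_elt b) y).
  by case=> F'D F'Z; rewrite RR_act_diag_elt F'D (additive_mapN _ F'D) F'Z.
elim: n F => [|n IHn] F lF Fz b /=.
  move=> y; rewrite commE //; apply: Fz.
  by exists (diag_elt b), y; split=> //; apply: diag_elt_ker.
apply: IHn => [|z zI]; first exact: jet_linear_comm.
rewrite commE //; apply: Fz.
by exists (diag_elt b), z; split=> //; apply: diag_elt_ker.
Qed.

Lemma Ipow_mod_kernelP n F : jet_linear F ->
  (forall z, Ipow_mod n z -> F z = 0) <-> comm_nil n.+1 F.
Proof.
move=> lF; split=> [Fz | cF z [s [sI ->]]].
  apply: Ipow_gen_comm_nil => // z zI; apply: Fz; exists [:: z].
  by split=> [g|]; rewrite ?big_seq1 // inE => /eqP ->.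
elim: s sI => [|g s IHs] sI; first by rewrite big_nil (additive_map0 (proj1 lF)).
rewrite big_cons (proj1 lF) IHs => [|g' g's]; last by apply: sI; rewrite inE g's orbT.
by rewrite (comm_nil_Ipow_gen lF cF (sI g (mem_head _ _))) addr0.
Qed.

Lemma comm_nil_ext n F G : F =1 G -> comm_nil n F -> comm_nil n G.
Proof. by move=> /funext ->. Qed.

Lemma comm_nil0 n : comm_nil n (fun _ => 0).
Proof.
elim: n => [|n IHn] //= b; apply: comm_nil_ext IHn => y.
by rewrite /jet_comm scaler0 subrr.
Qed.

Lemma comm_nilD n F G : comm_nil n F -> comm_nil n G -> comm_nil n (fun y => F y + G y).
Proof.
elim: n F G => [|n IHn] F G /= cF cG; first by move=> y; rewrite cF cG addr0.
move=> b; apply: comm_nil_ext (IHn _ _ (cF b) (cG b)) => y.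
by rewrite /jet_comm scalerDr opprD addrACA.
Qed.

Lemma comm_nilZ n r F : comm_nil n F -> comm_nil n (fun y => r *: F y).
Proof.
elim: n F => [|n IHn] F /= cF; first by move=> y; rewrite cF scaler0.
move=> b; apply: comm_nil_ext (IHn _ (cF b)) => y.
by rewrite /jet_comm scalerBr !scalerA mulrC.
Qed.

Lemma comm_nil_sum (I : Type) n (s : seq I) (Fs : I -> RtQ -> Q2) :
  (forall i, comm_nil n (Fs i)) -> comm_nil n (fun y => \sum_(i <- s) Fs i y).
Proof.
move=> cFs; elim: s => [|i s IHs].
  by apply: comm_nil_ext (comm_nil0 n) => y; rewrite big_nil.
by apply: comm_nil_ext (comm_nilD (cFs i) IHs) => y; rewrite big_cons.
Qed.

Lemma comm_nilS n F : comm_nil n F -> comm_nil n.+1 F.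
Proof.
elim: n F => [|n IHn] F /= cF b; last exact: IHn.
by apply: comm_nil_ext (comm_nil0 0) => y; rewrite /jet_comm !cF scaler0 subrr.
Qed.

Lemma comm_nil_leq n m F : (n <= m)%N -> comm_nil n F -> comm_nil m F.
Proof.
move=> /subnK <-; elim: (m - n)%N => [|d IHd] cF //=.
exact: comm_nilS (IHd cF).
Qed.

End Jets.

Section JetPairing.
Variables (k R : comPzRingType) (phi : k -> R) (M M' : lmodType R).
Variables (F : RtQ phi M -> M').

Definition jet_pair (a : R) (m : M) : M' := F (tpi [:: (a, m)]).

Hypothesis lF : jet_linear F.

Lemma jet_pairDl a a' m : jet_pair (a + a') m = jet_pair a m + jet_pair a' m.
Proof.
rewrite /jet_pair -(proj1 lF) tens_addE; congr F.
by apply: tensP => W f [fDl _ _]; rewrite /sumf !big_cons !big_nil /= fDl !addr0.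
Qed.

Lemma jet_pairDr a m m' : jet_pair a (m + m') = jet_pair a m + jet_pair a m'.
Proof.
rewrite /jet_pair -(proj1 lF) tens_addE; congr F.
by apply: tensP => W f [_ fDr _]; rewrite /sumf !big_cons !big_nil /= fDr !addr0.
Qed.

Lemma jet_pairZl r a m : jet_pair (r * a) m = r *: jet_pair a m.
Proof. by rewrite /jet_pair -(proj2 lF) /jet_R_scale RR_act_pi pairs1 /= scale1r. Qed.

Lemma jet_pair_kr c a m : jet_pair a (kact_m phi c m) = kact_m phi c (jet_pair a m).
Proof.
rewrite /kact_m -jet_pairZl /jet_pair; congr F.
by apply: tensP => W f [_ _ fk]; rewrite /sumf !big_cons !big_nil /= -fk /kact_r mulrC.
Qed.

End JetPairing.

Lemma jet_pair_comm (k R : comPzRingType) (phi : k -> R) (M M' : lmodType R)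
  (F : RtQ phi M -> M') b a m :
  jet_pair (jet_comm b F) a m = jet_pair F a (b *: m) - b *: jet_pair F a m.
Proof. by rewrite /jet_pair /jet_comm /jet_rscale RR_act_pi pairs1 /= mul1r. Qed.

Section TensorJet.
Variables (k A B : comPzRingType) (phiA : {rmorphism k -> A}) (phiB : {rmorphism k -> B}).
Variables (M1 M2 : lmodType A) (N1 N2 : lmodType B).

Notation T := (tens_alg phiA phiB).
Notation Q1 := (tens_mod phiA phiB M1 N1).
Notation Q2 := (tens_mod phiA phiB M2 N2).
Notation ts := (tens_struct phiA phiB).
Notation JA := (RtQ phiA M1).
Notation JB := (RtQ phiB N1).
Notation JT := (RtQ ts Q1).

Lemma tens_alg_mul_pi s t : (tpi s : T) * tpi t = tpi (pairs *%R *%R s t).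
Proof. exact: ta_mul_pi. Qed.

Lemma tens_mod_scale_pi (M : lmodType A) (N : lmodType B) s t :
  (tpi s : T) *: (tpi t : tens_mod phiA phiB M N) = tpi (pairs *:%R *:%R s t).
Proof. exact: tm_scale_pi. Qed.

Definition tens_jet_pair (F : JA -> M2) (G : JB -> N2) (al : T) (mu : Q1) : Q2 :=
  lift2 (aM' := kact_m phiA (V := M2)) (aN' := kact_m phiB (V := N2))
    (jet_pair F) (jet_pair G) al mu.

Definition tens_jet (F : JA -> M2) (G : JB -> N2) (X : JT) : Q2 :=
  sumf (tens_jet_pair F G) (trepr X).

Lemma tens_jet0l F G : F =1 (fun _ => 0) -> tens_jet F G =1 (fun _ => 0).
Proof.
move=> F0 X; rewrite /tens_jet /sumf big1 // => p _.
apply: (@tensP _ _ _ _ _ _ [::]) => W f f_bal.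
rewrite sumf_pairs sumf_nil big1 // => a _; rewrite big1 // => b _.
by rewrite /jet_pair F0 (balanced0l f_bal).
Qed.

Lemma tens_jet0r F G : G =1 (fun _ => 0) -> tens_jet F G =1 (fun _ => 0).
Proof.
move=> G0 X; rewrite /tens_jet /sumf big1 // => p _.
apply: (@tensP _ _ _ _ _ _ [::]) => W f f_bal.
rewrite sumf_pairs sumf_nil big1 // => a _; rewrite big1 // => b _.
by rewrite /jet_pair G0 (balanced0r f_bal).
Qed.

Section Linear.
Variables (F : JA -> M2) (G : JB -> N2).
Hypotheses (lF : jet_linear F) (lG : jet_linear G).

Lemma tens_jet_pair_pi s t :
  tens_jet_pair F G (tpi s) (tpi t) = tpi (pairs (jet_pair F) (jet_pair G) s t).
Proof.
apply: lift2_pi => *;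
  rewrite ?jet_pairDl ?jet_pairDr ?jet_pair_kr // /kact_r jet_pairZl //.
Qed.

Lemma tens_jet_pair_balanced :
  balanced (kact_r ts) (kact_m ts (V := Q1)) (tens_jet_pair F G).
Proof.
split=> [x x' y|x y y'|c x y]; elim/tensW: x => x; elim/tensW: y => y.
- elim/tensW: x' => x'; rewrite tens_addE !tens_jet_pair_pi tens_addE.
  by apply: tensP => W f _; rewrite sumf_cat !sumf_pairs big_cat.
- elim/tensW: y' => y'; rewrite tens_addE !tens_jet_pair_pi tens_addE.
  apply: tensP => W f _; rewrite sumf_cat !sumf_pairs -big_split.
  by apply: eq_bigr => p _; rewrite big_cat.
rewrite /kact_r /kact_m /tens_struct tens_alg_mul_pi tens_mod_scale_pi !pairs1.
rewrite !tens_jet_pair_pi; apply: tensP => W f _; rewrite !sumf_pairs big_map.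
apply: eq_bigr => p _; rewrite big_map; apply: eq_bigr => q _ /=.
by rewrite !mul1r scale1r (jet_pairZl lF) -[phiA c *: q.1]/(kact_m phiA c q.1)
  (jet_pair_kr lF).
Qed.

Lemma tens_jet_pi s : tens_jet F G (tpi s) = sumf (tens_jet_pair F G) s.
Proof. exact: sumf_pi s tens_jet_pair_balanced. Qed.

Lemma tens_jet_pairZ r al mu : tens_jet_pair F G (r * al) mu = r *: tens_jet_pair F G al mu.
Proof.
elim/tensW: r => r; elim/tensW: al => al; elim/tensW: mu => mu.
rewrite tens_alg_mul_pi !tens_jet_pair_pi tens_mod_scale_pi; apply: tensP => W f _.
rewrite /sumf /pairs !big_allpairs_dep /=.
under [RHS]eq_bigr => p _ do rewrite big_allpairs_dep /=.
apply: eq_bigr => p _; apply: eq_bigr => q _; apply: eq_bigr => u _ /=.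
by rewrite (jet_pairZl lF) (jet_pairZl lG).
Qed.

Lemma tens_jet_linear : jet_linear (tens_jet F G).
Proof.
split=> [x y|r x]; elim/tensW: x => x; first by elim/tensW: y => y;
  rewrite tens_addE !tens_jet_pi sumf_cat.
rewrite /jet_R_scale RR_act_pi pairs1 !tens_jet_pi /sumf big_map scaler_sumr.
by apply: eq_bigr => p _ /=; rewrite scale1r tens_jet_pairZ.
Qed.

End Linear.

Lemma tens_jet_comm F G a b : jet_linear F -> jet_linear G ->
  jet_comm (tpi [:: (a, b)] : T) (tens_jet F G) =1
  fun y => tens_jet (jet_comm a F) (jet_comm b G) y
         + tens_jet (jet_comm a F) (fun z => b *: G z) y
         + tens_jet (fun z => a *: F z) (jet_comm b G) y.
Proof.
move=> lF lG y; elim/tensW: y => s.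
have [lFa lGb] := (jet_linear_comm a lF, jet_linear_comm b lG).
have [laF lbG] := (jet_linearZ a lF, jet_linearZ b lG).
rewrite {1}/jet_comm /jet_rscale RR_act_pi pairs1 !tens_jet_pi // /sumf big_map.
rewrite scaler_sumr -sumrB -!big_split; apply: eq_bigr => p _ /=; rewrite mul1r.
elim/tensW: (p.1) => sa; elim/tensW: (p.2) => sm.
rewrite tens_mod_scale_pi pairs1 !tens_jet_pair_pi // tens_mod_scale_pi pairs1.
apply/eqP; rewrite subr_eq; apply/eqP; rewrite !tens_addE; apply: tensP => W f f_bal.
rewrite ?(sumf_cat, sumf_pi _ f_bal) !sumf_pairs /sumf big_map /pairs big_allpairs_dep.
rewrite -!big_split; apply: eq_bigr => q _ /=; rewrite big_map.
rewrite -!big_split; apply: eq_bigr => u _ /=.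
rewrite !jet_pair_comm /jet_pair.
exact: balanced_expand f_bal _ (a *: F _) _ (b *: G _).
Qed.

Lemma comm_nil_tens_jet p q (F : JA -> M2) (G : JB -> N2) :
  jet_linear F -> jet_linear G -> comm_nil p F -> comm_nil q G ->
  comm_nil (p + q) (tens_jet F G).
Proof.
elim: p q F G => [|p IHp] q F G lF lG cF cG.
  by apply: comm_nil_ext (comm_nil0 _ _ _ _) => y; rewrite tens_jet0l.
elim: q F G lF lG cF cG => [|q IHq] F G lF lG cF cG.
  by apply: comm_nil_ext (comm_nil0 _ _ _ _) => y; rewrite tens_jet0r.
rewrite addSn /= => ab; elim/tensW: ab => s.
rewrite (tpi_sum _ _ s) (jet_comm_sum _ _ (tens_jet_linear lF lG)).
apply: comm_nil_sum => -[a b].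
apply: comm_nil_ext (fun y => esym (tens_jet_comm a b lF lG y)) _.
have [lFa lGb] := (jet_linear_comm a lF, jet_linear_comm b lG).
apply: comm_nilD; first apply: comm_nilD.
- by apply: comm_nil_leq (IHp q _ _ lFa lGb (cF a) (cG b)); rewrite leq_add2l.
- exact: IHp q.+1 _ _ lFa (jet_linearZ b lG) (cF a) (comm_nilZ b cG).
- by rewrite -addSnnS; apply: IHq _ _ (jet_linearZ a lF) lGb (comm_nilZ a cF) (cG b).
Qed.

Section TensMap.
Variables (D : M1 -> M2) (E : N1 -> N2).
Hypotheses (DD : forall m m', D (m + m') = D m + D m')
  (DZ : forall c m, D (phiA c *: m) = phiA c *: D m)
  (ED : forall n n', E (n + n') = E n + E n')
  (EZ : forall c n, E (phiB c *: n) = phiB c *: E n).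

Lemma tens_map_pi t :
  tens_map D E (tpi t : Q1) = tpi [seq (D p.1, E p.2) | p <- t] :> Q2.
Proof.
rewrite /tens_map; apply: tensP => W f [fDl fDr fk].
have DE_bal : balanced (kact_m phiA (V := M1)) (kact_m phiB (V := N1))
    (fun m n => f (D m) (E n)).
  split=> [m m' n|m n n'|c m n]; rewrite ?DD ?ED ?fDl ?fDr //.
  by rewrite /kact_m DZ EZ -fk.
by rewrite /sumf !big_map; apply: sumf_pi t DE_bal.
Qed.

Lemma tens_mapD (x y : Q1) : tens_map D E (x + y) = tens_map D E x + tens_map D E y.
Proof.
elim/tensW: x => x; elim/tensW: y => y.
by rewrite tens_addE !tens_map_pi map_cat tens_addE.
Qed.

Lemma tens_map_struct_scale c (x : Q1) : tens_map D E (ts c *: x) = ts c *: tens_map D E x.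
Proof.
elim/tensW: x => x.
rewrite /tens_struct tens_mod_scale_pi pairs1 !tens_map_pi tens_mod_scale_pi pairs1.
by rewrite -!map_comp; congr tpi; apply: eq_map => q /=; rewrite DZ !scale1r.
Qed.

Lemma tens_jet_d (F : JA -> M2) (G : JB -> N2) :
  jet_linear F -> jet_linear G ->
  (forall m, D m = F (jet_d phiA m)) -> (forall n, E n = G (jet_d phiB n)) ->
  forall x, tens_map D E x = tens_jet F G (jet_d ts x).
Proof.
move=> lF lG DF EG x; elim/tensW: x => t.
rewrite /jet_d tens_jet_pi // /sumf big_seq1 /=.
rewrite -[1 : T]/(tpi [:: (1, 1)] : T) tens_jet_pair_pi // pairs1 tens_map_pi.
by congr tpi; apply: eq_map => q; rewrite /jet_pair DF EG.
Qed.

End TensMap.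

End TensorJet.

Theorem mainTheorem19 (k A B : comPzRingType)
  (phiA : {rmorphism k -> A}) (phiB : {rmorphism k -> B})
  (M1 M2 : lmodType A) (N1 N2 : lmodType B) (D : M1 -> M2) (E : N1 -> N2) :
  is_diffop phiA D -> is_diffop phiB E ->
  is_diffop (tens_struct phiA phiB) (tens_map D E).
Proof.
case=> DD DZ [m [F [FD FZ FI DF]]]; case=> ED EZ [n [G [GD GZ GI EG]]].
have lF : jet_linear F by [].
have lG : jet_linear G by [].
have lFG := tens_jet_linear lF lG.
split; [exact: tens_mapD | exact: tens_map_struct_scale |].
exists (m + n).+1, (tens_jet F G).
split; [exact: lFG.1 | exact: lFG.2 | | exact: tens_jet_d].
apply/(Ipow_mod_kernelP _ lFG); rewrite -addnS -addSn.
by apply: comm_nil_tens_jet => //; apply/Ipow_mod_kernelP.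
Qed.
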